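(* Let $\gamma:S^n\to\mathbb{R}_+$ be continuous. Then $\mathcal W_\gamma$ is a self-dual Wulff shape if and only if the spherical convex body $\alpha_N^{-1}\circ Id(\mathcal W_\gamma)\subset S^{n+1}$ is of constant diameter $\pi/2$.
   Context: Wulff shapes. For continuous $\gamma:S^n\to\mathbb{R}_+$, the Wulff shape is $\mathcal W_\gamma=\bigcap_{\theta\in S^n}\{x\in\mathbb{R}^{n+1}:x\cdot\theta\le\gamma(\theta)\}$. Its radial function is $\rho(\theta)=\max\{\lambda>0:\lambda\theta\in\mathcal W_\gamma\}$. Dual and self-dual Wulff shapes. With $\bar\gamma(\theta)=1/\rho(-\theta)$, the dual Wulff shape is $\mathcal{DW}_\gamma=\mathcal W_{\bar\gamma}$; equivalently $\mathcal{DW}_\gamma=-(\mathcal W_\gamma)^\circ$, where $K^\circ=\{x:x\cdot y\le1\ \forall y\in K\}$ is the Euclidean polar. $\mathcal W_\gamma$ is self-dual if $\mathcal W_\gamma=\mathcal{DW}_\gamma$. The maps. $Id(x)=(x,1)$. With $N=(0,\dots,0,1)$ and $S^{n+1}_{N,+}=\{Q\in S^{n+1}:Q_{n+2}>0\}$, the central projection $\alpha_N:S^{n+1}_{N,+}\to\mathbb{R}^{n+1}\times\{1\}$ is $\alpha_N(P_1,\dots,P_{n+2})=(P_1/P_{n+2},\dots,P_{n+1}/P_{n+2},1)$. Constant diameter. The spherical distance on $S^{n+1}$ is $|PQ|=\arccos(P\cdot Q)$. The diameter of $K$ is $\max\{|PQ|:P,Q\in K\}$. A spherical convex body $K$ is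 of constant diameter $\tau$ if its diameter is $\tau$ and, for every boundary point $P$ of $K$ (boundary relative to $S^{n+1}$), there is $Q\in K$ with $|PQ|=\tau$. *)

From Stdlib Require Import Reals.
Open Scope R_scope.

(* Points of R^(m+1) are represented as functions nat -> R; only the
   coordinates 0..m are relevant (all definitions below only read them). *)
Definition vec := nat -> R.

Definition dot (m : nat) (x y : vec) : R := sum_f_R0 (fun i => x i * y i) m.

Definition edist (m : nat) (x y : vec) : R :=
  sqrt (sum_f_R0 (fun i => (x i - y i) * (x i - y i)) m).

Definition sphere (m : nat) (x : vec) : Prop := dot m x x = 1.

Definition continuous_on_sphere (n : nat) (gamma : vec -> R) : Prop :=
  forall th, sphere n th -> forall eps, eps > 0 ->
    exists delta, delta > 0 /\
      forall th', sphere n th' -> edist n th th' < delta ->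
        Rabs (gamma th - gamma th') < eps.

Definition positive_on_sphere (n : nat) (gamma : vec -> R) : Prop :=
  forall th, sphere n th -> gamma th > 0.

Definition Wulff (n : nat) (gamma : vec -> R) (x : vec) : Prop :=
  forall th, sphere n th -> dot n x th <= gamma th.

Definition scale (l : R) (x : vec) : vec := fun i => l * x i.
Definition vopp (x : vec) : vec := fun i => - x i.

Definition is_radial (n : nat) (gamma : vec -> R) (th : vec) (r : R) : Prop :=
  r > 0 /\ Wulff n gamma (scale r th) /\
  forall l, l > 0 -> Wulff n gamma (scale l th) -> l <= r.

(* Dual Wulff shape DW_gamma = W_{gamma_bar}, gamma_bar(th) = 1 / rho(-th). *)
Definition DualWulff (n : nat) (gamma : vec -> R) (x : vec) : Prop :=
  forall th, sphere n th ->
    forall r, is_radial n gamma (vopp th) r -> dot n x th <= / r.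

Definition self_dual (n : nat) (gamma : vec -> R) : Prop :=
  forall x, Wulff n gamma x <-> DualWulff n gamma x.

(* alpha_N : S^{n+1}_{N,+} -> R^{n+1} x {1}, P |-> (P_i / P_{n+2})_i.
   Coordinate n+1 (0-based) is the last coordinate of R^{n+2}. *)
Definition alphaN (n : nat) (P : vec) : vec := fun i => P i / P (S n).

Definition IdMap (n : nat) (x : vec) : vec :=
  fun i => if Nat.leb i n then x i else 1.

Definition image_Id (n : nat) (A : vec -> Prop) (y : vec) : Prop :=
  exists x, A x /\ forall i, (i <= S n)%nat -> y i = IdMap n x i.

Definition alphaN_inv (n : nat) (Sset : vec -> Prop) (P : vec) : Prop :=
  sphere (S n) P /\ P (S n) > 0 /\ Sset (alphaN n P).

Definition sdist (m : nat) (P Q : vec) : R := acos (dot m P Q).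

Definition sph_boundary (m : nat) (K : vec -> Prop) (P : vec) : Prop :=
  sphere m P /\
  forall eps, eps > 0 ->
    (exists Q, sphere m Q /\ K Q /\ edist m P Q < eps) /\
    (exists Q, sphere m Q /\ ~ K Q /\ edist m P Q < eps).

Definition diameter_is (m : nat) (K : vec -> Prop) (tau : R) : Prop :=
  (exists P Q, K P /\ K Q /\ sdist m P Q = tau) /\
  (forall P Q, K P -> K Q -> sdist m P Q <= tau).

Definition constant_diameter (m : nat) (K : vec -> Prop) (tau : R) : Prop :=
  diameter_is m K tau /\
  forall P, sph_boundary m K P -> exists Q, K Q /\ sdist m P Q = tau.

(* Write W for the Wulff shape of gamma, DW for its dual, and
   K = alpha_N^{-1}(Id(W)) in S^{n+1}.  The points of K are exactly the lifts
   lift z = (z,1)/sqrt(1+|z|^2) of the points z of W, and for two points of the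
   open upper hemisphere <P,Q> = P_{n+1} Q_{n+1} (<alpha P, alpha Q> + 1).  So
   |PQ| <= pi/2 iff <alpha P, alpha Q> >= -1, with equality of the distance iff
   <alpha P, alpha Q> = -1.  The theorem then follows from three facts:
   (1) <x,y> >= -1 whenever x is in DW and y in W, hence W is contained in DW
       iff <x,y> >= -1 on W x W;
   (2) every boundary point of K is the lift of a point of W lying on a
       supporting hyperplane <z,th0> = gamma th0, and -th0/gamma th0 lies in DW;
   (3) every ray from the origin that leaves W meets the boundary of K.
   If W = DW, (1) bounds the diameter by pi/2 and (2) gives every boundary point
   a partner at distance pi/2.  Conversely, diameter <= pi/2 gives W in DW, and
   a point x of DW outside W would by (3) and the boundary condition give y in W
   and t < 1 with <t x, y> = -1, contradicting (1).  Compactness of the sphere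
   (from Coquelicot) provides the bounds on continuous functions used in (1), (2). *)

From Stdlib Require Import Reals Lra Lia Psatz Classical ClassicalEpsilon.
From Coquelicot Require Compactness.
Open Scope R_scope.

Lemma Rabs_le_between x a : Rabs x <= a -> - a <= x <= a.
Proof.
  intros H. pose proof (Rle_abs x). pose proof (Rle_abs (- x)).
  rewrite Rabs_Ropp in *. lra.
Qed.

Lemma dot_sym m x y : dot m x y = dot m y x.
Proof. unfold dot; apply sum_eq; intros; ring. Qed.

Lemma dot_ext_l m x x' y :
  (forall i, (i <= m)%nat -> x i = x' i) -> dot m x y = dot m x' y.
Proof. intros H; unfold dot; apply sum_eq; intros i Hi; rewrite H; auto. Qed.

Lemma dot_ext_r m x y y' :
  (forall i, (i <= m)%nat -> y i = y' i) -> dot m x y = dot m x y'.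
Proof. intros H; unfold dot; apply sum_eq; intros i Hi; rewrite H; auto. Qed.

Lemma dot_scale_l m l x y : dot m (scale l x) y = l * dot m x y.
Proof. unfold dot, scale; rewrite scal_sum; apply sum_eq; intros; ring. Qed.

Lemma dot_scale_r m l x y : dot m x (scale l y) = l * dot m x y.
Proof. rewrite dot_sym, dot_scale_l, dot_sym; auto. Qed.

Lemma dot_vopp_r m x y : dot m x (vopp y) = - dot m x y.
Proof.
  rewrite (dot_ext_r m x (vopp y) (scale (-1) y)) by (intros; unfold vopp, scale; ring).
  rewrite dot_scale_r; ring.
Qed.

Lemma dot_sub_l m x y z : dot m (fun i => x i - y i) z = dot m x z - dot m y z.
Proof. unfold dot; rewrite <- minus_sum; apply sum_eq; intros; ring. Qed.

Lemma dot_sub_r m x y z : dot m z (fun i => x i - y i) = dot m z x - dot m z y.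
Proof. rewrite dot_sym, dot_sub_l, (dot_sym m x), (dot_sym m y); auto. Qed.

Lemma dot_S n x y : dot (S n) x y = dot n x y + x (S n) * y (S n).
Proof. reflexivity. Qed.

Lemma dot_nonneg m x : 0 <= dot m x x.
Proof. unfold dot; apply cond_pos_sum; intros; nra. Qed.

Lemma dot_coord m x i : (i <= m)%nat -> x i * x i <= dot m x x.
Proof.
  induction m; intros Hi.
  - assert (i = 0%nat) by lia; subst; unfold dot; simpl; lra.
  - rewrite dot_S. destruct (Nat.eq_dec i (S m)) as [->|Hne].
    + pose proof (dot_nonneg m x); lra.
    + assert (Hi' : (i <= m)%nat) by lia. specialize (IHm Hi'). nra.
Qed.

Lemma dot_null_r m x y : dot m y y = 0 -> dot m x y = 0.
Proof.
  intros H0. unfold dot. rewrite (sum_eq _ (fun _ => 0)).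
  - rewrite sum_cte; ring.
  - intros i Hi. pose proof (dot_coord m y i Hi).
    assert (y i = 0) as -> by nra. ring.
Qed.

Lemma dot_expand m x y k :
  dot m (fun i => x i - k * y i) (fun i => x i - k * y i)
  = dot m x x - 2 * k * dot m x y + k * k * dot m y y.
Proof.
  unfold dot.
  replace (sum_f_R0 (fun i => (x i - k * y i) * (x i - k * y i)) m) with
    (sum_f_R0 (fun i => x i * x i - (2*k) * (x i * y i) + (k*k) * (y i * y i)) m)
    by (apply sum_eq; intros; ring).
  rewrite sum_plus, minus_sum, (scal_sum (fun i => x i * y i) m (2*k)),
    (scal_sum (fun i => y i * y i) m (k*k)).
  f_equal; [f_equal|]; apply sum_eq; intros; ring.
Qed.

(* Cauchy-Schwarz, by minimizing |x - k y|^2 over k. *)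
Lemma cauchy_schwarz m x y : dot m x y * dot m x y <= dot m x x * dot m y y.
Proof.
  destruct (Req_dec (dot m y y) 0) as [H0|H0].
  - rewrite (dot_null_r m x y H0), H0; lra.
  - pose proof (dot_nonneg m y).
    pose proof (dot_nonneg m (fun i => x i - (dot m x y / dot m y y) * y i)) as H1.
    rewrite dot_expand in H1.
    set (a := dot m x x) in *; set (b := dot m y y) in *; set (c := dot m x y) in *.
    replace (a - 2 * (c / b) * c + c / b * (c / b) * b) with ((a * b - c * c) / b) in H1
      by (field; lra).
    assert (0 <= a * b - c * c); [|lra].
    apply (Rmult_le_reg_r (/ b)); [apply Rinv_0_lt_compat; lra|].
    rewrite Rmult_0_l. exact H1.
Qed.

Lemma cauchy_schwarz_abs m x y :
  Rabs (dot m x y) <= sqrt (dot m x x) * sqrt (dot m y y).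
Proof.
  rewrite <- sqrt_mult by apply dot_nonneg.
  rewrite <- sqrt_Rsqr_abs. apply sqrt_le_1_alt. apply cauchy_schwarz.
Qed.

Lemma cauchy_schwarz_unit m x y : sphere m x -> sphere m y -> Rabs (dot m x y) <= 1.
Proof.
  unfold sphere; intros Hx Hy. pose proof (cauchy_schwarz_abs m x y) as H.
  rewrite Hx, Hy, sqrt_1 in H. lra.
Qed.

Lemma sphere_vopp m x : sphere m x -> sphere m (vopp x).
Proof.
  unfold sphere; intros H. rewrite dot_vopp_r, dot_sym, dot_vopp_r. lra.
Qed.

Lemma normalize_sphere m y l : l * l * dot m y y = 1 -> sphere m (scale l y).
Proof. intros Hl. unfold sphere. rewrite dot_scale_l, dot_scale_r, <- Hl. ring. Qed.

Definition e0 : vec := fun i => match i with O => 1 | _ => 0 end.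

Lemma e0_sphere n : sphere n e0.
Proof.
  unfold sphere. induction n as [|n IH].
  - unfold dot; simpl; lra.
  - rewrite dot_S, IH. simpl. lra.
Qed.

Lemma edist_eq m x y :
  edist m x y = sqrt (dot m (fun i => x i - y i) (fun i => x i - y i)).
Proof. reflexivity. Qed.

Lemma edist_sym m x y : edist m x y = edist m y x.
Proof. unfold edist. f_equal. apply sum_eq; intros; ring. Qed.

Lemma edist_self m x : edist m x x = 0.
Proof.
  rewrite edist_eq, (dot_null_r m _ (fun i => x i - x i)); [apply sqrt_0|].
  unfold dot. rewrite (sum_eq _ (fun _ => 0)) by (intros; ring). rewrite sum_cte; ring.
Qed.

Lemma edist_coord m x y i : (i <= m)%nat -> Rabs (x i - y i) <= edist m x y.
Proof.
  intros Hi. rewrite edist_eq, <- sqrt_Rsqr_abs. apply sqrt_le_1_alt.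
  apply (dot_coord m (fun i => x i - y i) i Hi).
Qed.

Lemma edist_S n x y : edist n x y <= edist (S n) x y.
Proof.
  rewrite !edist_eq. apply sqrt_le_1_alt. rewrite dot_S.
  pose proof (Rle_0_sqr (x (S n) - y (S n))); unfold Rsqr in *; lra.
Qed.

Lemma edist_unit m U V :
  sphere m U -> sphere m V -> edist m U V = sqrt (2 - 2 * dot m U V).
Proof.
  intros HU HV. rewrite edist_eq. f_equal.
  rewrite dot_sub_l, !dot_sub_r. unfold sphere in *. rewrite (dot_sym m V U). lra.
Qed.

Lemma dot_lipschitz m a x y :
  Rabs (dot m a x - dot m a y) <= sqrt (dot m a a) * edist m x y.
Proof. rewrite <- dot_sub_r, edist_eq. apply cauchy_schwarz_abs. Qed.

Lemma dot_lipschitz_unit m a x y :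
  dot m a a <= 1 -> Rabs (dot m a x - dot m a y) <= edist m x y.
Proof.
  intros H. pose proof (dot_lipschitz m a x y).
  assert (sqrt (dot m a a) <= 1) by (rewrite <- sqrt_1; apply sqrt_le_1_alt; auto).
  assert (0 <= edist m x y) by apply sqrt_pos.
  nra.
Qed.

Lemma norm_triangle m x y : sqrt (dot m x x) <= sqrt (dot m y y) + edist m x y.
Proof.
  set (v := fun i => x i - y i).
  assert (Hx : dot m x x = dot m y y + 2 * dot m y v + dot m v v).
  { rewrite <- (dot_ext_l m (fun i => y i - (-1) * v i) x)
      by (intros; unfold v; ring).
    rewrite <- (dot_ext_r m _ (fun i => y i - (-1) * v i) x)
      by (intros; unfold v; ring).
    rewrite dot_expand; ring. }
  pose proof (cauchy_schwarz_abs m y v) as Hcs. pose proof (Rle_abs (dot m y v)).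
  rewrite edist_eq. fold v.
  set (a := sqrt (dot m y y)) in *; set (b := sqrt (dot m v v)) in *.
  assert (Ha : a * a = dot m y y) by apply sqrt_sqrt, dot_nonneg.
  assert (Hb : b * b = dot m v v) by apply sqrt_sqrt, dot_nonneg.
  assert (0 <= a) by apply sqrt_pos; assert (0 <= b) by apply sqrt_pos.
  rewrite <- (sqrt_square (a + b)) by lra.
  apply sqrt_le_1_alt. nra.
Qed.

(** * Compactness of the sphere *)

Definition locally_bounded_on_sphere (n : nat) (g : vec -> R) : Prop :=
  forall th, sphere n th -> exists d, d > 0 /\ exists M,
    forall th', sphere n th' -> edist n th th' < d -> g th' <= M.

Fixpoint to_tuple (k : nat) (f : vec) : Compactness.Tn k R :=
  match k with
  | O => tt
  | S k' => (f O, to_tuple k' (fun i => f (S i)))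
  end.

Fixpoint of_tuple (k : nat) : Compactness.Tn k R -> vec :=
  match k with
  | O => fun _ _ => 0
  | S k' => fun T i => match i with O => fst T | S j => of_tuple k' (snd T) j end
  end.

Lemma close_n_coord k d f T : Compactness.close_n k d (to_tuple k f) T ->
  forall i, (i < k)%nat -> Rabs (f i - of_tuple k T i) < d.
Proof.
  revert f T; induction k as [|k IH]; intros f T H i Hi; [lia|].
  destruct T as [t1 T2]. destruct H as [H1 H2].
  destruct i; simpl; auto.
  apply (IH (fun i => f (S i)) T2 H2 i). lia.
Qed.

Lemma bounded_n_unit_cube k f : (forall i, (i < k)%nat -> -1 <= f i <= 1) ->
  Compactness.bounded_n k (to_tuple k (fun _ => -1)) (to_tuple k (fun _ => 1))
    (to_tuple k f).
Proof.
  revert f; induction k as [|k IH]; intros f H; simpl; auto.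
  split; [apply H; lia|]. apply (IH (fun i => f (S i))). intros; apply H; lia.
Qed.

Lemma sq_lt_of_abs a d : Rabs a < d -> a * a < d * d.
Proof.
  intros H.
  assert (Rabs a * Rabs a = a * a) by (rewrite <- Rabs_mult; apply Rabs_right; nra).
  pose proof (Rabs_pos a). nra.
Qed.

Lemma dot_lt_of_coords m v d : (forall i, (i <= m)%nat -> Rabs (v i) < d) ->
  dot m v v < INR (S m) * (d * d).
Proof.
  induction m as [|m IH]; intros H.
  - unfold dot; simpl. pose proof (sq_lt_of_abs _ _ (H O (le_n _))). lra.
  - rewrite dot_S, S_INR.
    pose proof (sq_lt_of_abs _ _ (H (S m) (le_n _))).
    assert (dot m v v < INR (S m) * (d * d)) by (apply IH; intros; apply H; lia).
    lra.
Qed.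

Lemma edist_lt_of_coords m x t d : d > 0 ->
  (forall i, (i <= m)%nat -> Rabs (x i - t i) < d / INR (S m)) -> edist m x t < d.
Proof.
  intros Hd Hc. pose proof (lt_0_INR (S m) (Nat.lt_0_succ m)) as Hm.
  assert (Hm1 : 1 <= INR (S m)) by (apply (le_INR 1); lia).
  pose proof (dot_lt_of_coords m (fun i => x i - t i) _ Hc) as Hsum.
  assert (INR (S m) * (d / INR (S m) * (d / INR (S m))) <= d * d).
  { replace (INR (S m) * (d / INR (S m) * (d / INR (S m)))) with (d * d / INR (S m))
      by (field; lra).
    apply Rmult_le_reg_r with (INR (S m)); [lra|].
    replace (d * d / INR (S m) * INR (S m)) with (d * d) by (field; lra). nra. }
  rewrite edist_eq, <- (sqrt_square d) by lra. apply sqrt_lt_1_alt.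
  split; [apply dot_nonneg | lra].
Qed.

Lemma sphere_complement_open m t : ~ sphere m t ->
  exists d, d > 0 /\ forall x, edist m x t < d -> ~ sphere m x.
Proof.
  intros Ht. set (a := sqrt (dot m t t)).
  assert (Ha : a <> 1).
  { intros Ha. apply Ht. unfold sphere.
    rewrite <- (sqrt_sqrt (dot m t t)) by apply dot_nonneg. fold a. rewrite Ha; ring. }
  exists (Rabs (a - 1)). split; [apply Rabs_pos_lt; lra|].
  intros x Hd Hx. unfold sphere in Hx.
  pose proof (norm_triangle m x t) as H1. pose proof (norm_triangle m t x) as H2.
  rewrite Hx, sqrt_1 in H1, H2. rewrite edist_sym in H2. fold a in H1, H2.
  destruct (Rle_dec a 1); [rewrite Rabs_left1 in Hd | rewrite Rabs_right in Hd]; lra.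
Qed.

(* Local boundedness, restated for coordinate cubes around arbitrary points:
   off the sphere the cube may be chosen to miss the sphere. *)
Lemma locally_bounded_cube n g : locally_bounded_on_sphere n g ->
  forall t, exists p : R * R, fst p > 0 /\ forall x, sphere n x ->
    (forall i, (i <= n)%nat -> Rabs (x i - t i) < fst p) -> g x <= snd p.
Proof.
  intros Hl t. pose proof (lt_0_INR (S n) (Nat.lt_0_succ n)).
  destruct (classic (sphere n t)) as [Ht|Ht].
  - destruct (Hl t Ht) as [d [Hd [M HM]]].
    exists (d / INR (S n), M). cbn [fst snd].
    split; [apply Rlt_gt, Rdiv_lt_0_compat; lra|].
    intros x Hx Hc. apply HM; auto. rewrite edist_sym. apply edist_lt_of_coords; auto.
  - destruct (sphere_complement_open n t Ht) as [d [Hd Hout]].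
    exists (d / INR (S n), 0). cbn [fst snd].
    split; [apply Rlt_gt, Rdiv_lt_0_compat; lra|].
    intros x Hx Hc. exfalso. apply (Hout x); auto. apply edist_lt_of_coords; auto.
Qed.

Lemma bounded_of_locally_bounded n g : locally_bounded_on_sphere n g ->
  exists M, forall th, sphere n th -> g th <= M.
Proof.
  intros Hl. pose proof (locally_bounded_cube n g Hl) as Hs.
  set (f := fun t => proj1_sig (constructive_indefinite_description _ (Hs t))).
  assert (Hf : forall t, fst (f t) > 0 /\ forall x, sphere n x ->
      (forall i, (i <= n)%nat -> Rabs (x i - t i) < fst (f t)) -> g x <= snd (f t)).
  { intros t. unfold f. destruct (constructive_indefinite_description _ (Hs t)); auto. }
  set (delta := fun T => mkposreal (fst (f (of_tuple (S n) T)))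
                                   (proj1 (Hf (of_tuple (S n) T)))).
  apply NNPP. intros Hno.
  apply (Compactness.compactness_list (S n) (to_tuple (S n) (fun _ => -1))
           (to_tuple (S n) (fun _ => 1)) delta).
  intros [l Hcover]. apply Hno.
  exists (List.fold_right (fun T acc => Rmax (snd (f (of_tuple (S n) T))) acc) 0 l).
  intros x Hx.
  destruct (Hcover (to_tuple (S n) x)) as [T [HTl [_ HTclose]]].
  { apply bounded_n_unit_cube. intros i Hi.
    pose proof (dot_coord n x i ltac:(lia)). unfold sphere in Hx. nra. }
  apply Rle_trans with (snd (f (of_tuple (S n) T))).
  - apply (proj2 (Hf (of_tuple (S n) T))); auto.
    intros i Hi. apply (close_n_coord (S n) (delta T) x T HTclose i). lia.
  - clear -HTl. induction l as [|T' l IH]; simpl in *; [tauto|].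
    destruct HTl as [<-|HTl]; [apply Rmax_l|].
    eapply Rle_trans; [apply IH; auto | apply Rmax_r].
Qed.

Lemma continuous_bounded_above n g : continuous_on_sphere n g ->
  exists M, forall th, sphere n th -> g th <= M.
Proof.
  intros Hc. apply bounded_of_locally_bounded. intros th Hth.
  destruct (Hc th Hth 1 ltac:(lra)) as [d [Hd Hd2]].
  exists d; split; auto. exists (g th + 1). intros th' H1 H2.
  specialize (Hd2 th' H1 H2). apply Rabs_def2 in Hd2. lra.
Qed.

(* A continuous positive function on the sphere has a positive lower bound,
   obtained by bounding its (locally bounded) reciprocal. *)
Lemma continuous_positive_bounded_below n g :
  continuous_on_sphere n g -> positive_on_sphere n g ->
  exists c, c > 0 /\ forall th, sphere n th -> g th >= c.
Proof.
  intros Hc Hp.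
  destruct (bounded_of_locally_bounded n (fun th => / g th)) as [M HM].
  { intros th Hth. pose proof (Hp th Hth).
    destruct (Hc th Hth (g th / 2) ltac:(lra)) as [d [Hd Hd2]].
    exists d; split; auto. exists (2 / g th). intros th' H1 H2.
    specialize (Hd2 th' H1 H2). apply Rabs_def2 in Hd2.
    apply Rle_trans with (/ (g th / 2)); [|right; field; lra].
    apply Rlt_le, Rinv_lt_contravar; [apply Rmult_lt_0_compat|]; lra. }
  exists (/ Rmax M 1). pose proof (Rmax_r M 1). split.
  - apply Rlt_gt, Rinv_0_lt_compat; lra.
  - intros th Hth. pose proof (Hp th Hth). specialize (HM th Hth).
    pose proof (Rmax_l M 1). apply Rle_ge.
    replace (g th) with (/ / g th) by (field; lra).
    apply Rinv_le_contravar; [apply Rinv_0_lt_compat|]; lra.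
Qed.

Lemma continuous_affine n g a v : continuous_on_sphere n g ->
  continuous_on_sphere n (fun th => a * g th + dot n v th).
Proof.
  intros Hc th Hth eps Heps.
  set (A := Rabs a + 1); set (B := sqrt (dot n v v) + 1).
  assert (HA : A > 0) by (unfold A; pose proof (Rabs_pos a); lra).
  assert (HB : B > 0) by (unfold B; pose proof (sqrt_pos (dot n v v)); lra).
  destruct (Hc th Hth (eps / (2 * A)) ltac:(apply Rlt_gt, Rdiv_lt_0_compat; lra))
    as [d [Hd Hd2]].
  exists (Rmin d (eps / (2 * B))). split.
  { apply Rmin_pos; [lra | apply Rdiv_lt_0_compat; lra]. }
  intros th' Hth' Hdist.
  pose proof (Rmin_l d (eps / (2 * B))); pose proof (Rmin_r d (eps / (2 * B))).
  specialize (Hd2 th' Hth' ltac:(lra)).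
  pose proof (dot_lipschitz n v th th') as Hlip.
  replace (a * g th + dot n v th - (a * g th' + dot n v th'))
    with (a * (g th - g th') + (dot n v th - dot n v th')) by ring.
  eapply Rle_lt_trans; [apply Rabs_triang|]. rewrite Rabs_mult.
  pose proof (Rabs_pos a); pose proof (Rabs_pos (g th - g th')).
  pose proof (sqrt_pos (dot n v v)).
  assert (0 <= edist n th th') by apply sqrt_pos.
  assert (Rabs a * Rabs (g th - g th') < A * (eps / (2 * A))).
  { apply Rle_lt_trans with (A * Rabs (g th - g th')).
    - apply Rmult_le_compat_r; unfold A; lra.
    - apply Rmult_lt_compat_l; lra. }
  assert (sqrt (dot n v v) * edist n th th' <= B * (eps / (2 * B))).
  { apply Rmult_le_compat; unfold B in *; lra. }
  replace (A * (eps / (2 * A))) with (eps / 2) in * by (field; lra).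
  replace (B * (eps / (2 * B))) with (eps / 2) in * by (field; lra).
  lra.
Qed.

(** * Wulff shapes and their duals *)

Lemma wulff_ext n g x x' :
  (forall i, (i <= n)%nat -> x i = x' i) -> Wulff n g x -> Wulff n g x'.
Proof. intros He Hw th Hth. rewrite <- (dot_ext_l n x x'); auto. Qed.

Lemma wulff_origin n g x : positive_on_sphere n g -> Wulff n g (scale 0 x).
Proof. intros Hpos th Hth. rewrite dot_scale_l. specialize (Hpos th Hth). lra. Qed.

Lemma wulff_scale_lub n g x (E : R -> Prop) r :
  positive_on_sphere n g -> 0 <= r ->
  (forall l, E l -> Wulff n g (scale l x)) -> is_lub E r -> Wulff n g (scale r x).
Proof.
  intros Hpos Hr HE [_ Hleast] th Hth. rewrite dot_scale_l.
  set (k := dot n x th). pose proof (Hpos th Hth).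
  destruct (Rle_dec k 0); [nra|].
  assert (Hbound : r <= g th / k).
  { apply Hleast. intros l Hl. specialize (HE l Hl th Hth). rewrite dot_scale_l in HE.
    fold k in HE. apply Rmult_le_reg_r with k; [lra|].
    replace (g th / k * k) with (g th) by (field; lra). lra. }
  apply Rmult_le_compat_r with (r := k) in Hbound; [|lra].
  replace (g th / k * k) with (g th) in Hbound by (field; lra). lra.
Qed.

Lemma radial_exists n g c : c > 0 -> (forall th, sphere n th -> g th >= c) ->
  forall u, sphere n u -> exists r, is_radial n g u r.
Proof.
  intros Hc Hlow u Hu.
  assert (Hpos : positive_on_sphere n g) by (intros th Hth; specialize (Hlow th Hth); lra).
  set (E := fun l => l > 0 /\ Wulff n g (scale l u)).
  assert (Ec : E c).
  { split; auto. intros ph Hph. rewrite dot_scale_l.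
    pose proof (cauchy_schwarz_unit n u ph Hu Hph). pose proof (Rle_abs (dot n u ph)).
    specialize (Hlow ph Hph). nra. }
  destruct (completeness E) as [r Hr].
  { exists (g u). intros l [Hl Hw]. specialize (Hw u Hu).
    rewrite dot_scale_l in Hw. unfold sphere in Hu. rewrite Hu in Hw. lra. }
  { exists c; auto. }
  assert (Hrc : c <= r) by (apply (proj1 Hr); auto).
  exists r. split; [lra|]. split.
  - apply (wulff_scale_lub n g u E r Hpos ltac:(lra)); auto. intros l [_ Hl]; auto.
  - intros l Hl Hw. apply (proj1 Hr). split; auto.
Qed.

(* Fact (1): points of DW_gamma and W_gamma pair to at least -1.  For y in W
   and u = y/|y|, the radial function at u is at least |y|. *)
Lemma dual_pairing n g : continuous_on_sphere n g -> positive_on_sphere n g ->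
  forall x y, DualWulff n g x -> Wulff n g y -> dot n x y >= -1.
Proof.
  intros Hcont Hpos x y Hx Hy.
  destruct (continuous_positive_bounded_below n g Hcont Hpos) as [c [Hc Hlow]].
  destruct (Req_dec (dot n y y) 0) as [H0|H0].
  { rewrite (dot_null_r n x y H0). lra. }
  pose proof (dot_nonneg n y).
  set (ny := sqrt (dot n y y)).
  assert (Hny : 0 < ny) by (apply sqrt_lt_R0; lra).
  assert (Hny2 : ny * ny = dot n y y) by (apply sqrt_sqrt; lra).
  set (th := scale (- / ny) y).
  assert (Hth : sphere n th) by (apply normalize_sphere; rewrite <- Hny2; field; lra).
  destruct (radial_exists n g c Hc Hlow (vopp th) (sphere_vopp n th Hth)) as [r Hr].
  pose proof (Hx th Hth r Hr) as Hxth.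
  assert (Hge : ny <= r).
  { apply (proj2 (proj2 Hr)); [lra|]. apply (wulff_ext n g y); auto.
    intros i Hi. unfold th, vopp, scale. field. lra. }
  unfold th in Hxth. rewrite dot_scale_r in Hxth.
  assert (/ r <= / ny) by (apply Rinv_le_contravar; lra).
  assert (Hbound : - / ny * dot n x y <= / ny) by lra.
  apply Rmult_le_compat_l with (r := ny) in Hbound; [|lra].
  replace (ny * (- / ny * dot n x y)) with (- dot n x y) in Hbound by (field; lra).
  replace (ny * / ny) with 1 in Hbound by (field; lra). lra.
Qed.

(* The pairing condition <x,y> >= -1 on W_gamma x W_gamma; by [dual_pairing] and
   [wulff_in_dual] it says exactly that W_gamma is contained in DW_gamma. *)
Definition wulff_pairing_ge (n : nat) (g : vec -> R) : Prop :=
  forall x y, Wulff n g x -> Wulff n g y -> dot n x y >= -1.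

Lemma wulff_in_dual n g : wulff_pairing_ge n g ->
  forall x, Wulff n g x -> DualWulff n g x.
Proof.
  intros H x Hx th Hth r [Hr0 [Hr1 _]].
  specialize (H x _ Hx Hr1). rewrite dot_scale_r, dot_vopp_r in H.
  apply Rmult_le_reg_l with r; [lra|]. rewrite Rinv_r by lra. lra.
Qed.

Lemma self_dual_pairing n g : continuous_on_sphere n g -> positive_on_sphere n g ->
  self_dual n g -> wulff_pairing_ge n g.
Proof.
  intros Hcont Hpos SD x y Hx Hy. apply (dual_pairing n g Hcont Hpos); auto.
  apply SD; auto.
Qed.

Lemma facet_point_dual n g th0 : sphere n th0 -> g th0 > 0 ->
  DualWulff n g (scale (- / g th0) th0).
Proof.
  intros H0 Hg th Hth r [Hr0 [Hr1 _]].
  specialize (Hr1 th0 H0). rewrite dot_scale_l, dot_sym, dot_vopp_r in Hr1.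
  rewrite dot_scale_l.
  set (k := dot n th0 th) in *.
  assert (- k <= g th0 / r).
  { apply Rmult_le_reg_l with r; [lra|].
    replace (r * (g th0 / r)) with (g th0) by (field; lra). lra. }
  apply Rmult_le_reg_l with (g th0); [lra|].
  replace (g th0 * (- / g th0 * k)) with (- k) by (field; lra).
  replace (g th0 * / r) with (g th0 / r) by (unfold Rdiv; ring). lra.
Qed.

Lemma acos_le_PI2_iff v : acos v <= PI / 2 <-> 0 <= v.
Proof.
  pose proof PI_RGT_0 as Hpi. split; intros H.
  - destruct (Rle_dec v (-1)).
    + unfold acos in H. destruct (Rle_dec v (-1)); lra.
    + destruct (Rle_dec 1 v); [lra|].
      pose proof (acos_bound v). rewrite <- (cos_acos v) by lra.
      apply cos_ge_0; lra.
  - destruct (Rle_dec 1 v).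
    + unfold acos. destruct (Rle_dec v (-1)); [lra|]. destruct (Rle_dec 1 v); lra.
    + apply Rnot_lt_le. intros Hlt.
      pose proof (acos_bound v). pose proof (cos_acos v ltac:(lra)).
      assert (cos (acos v) < 0) by (apply cos_lt_0; lra). lra.
Qed.

Lemma acos_eq_PI2_iff v : acos v = PI / 2 <-> v = 0.
Proof.
  pose proof PI_RGT_0 as Hpi. split; intros H.
  - assert (Hv : -1 < v < 1).
    { unfold acos in H. destruct (Rle_dec v (-1)); [lra|].
      destruct (Rle_dec 1 v); lra. }
    rewrite <- (cos_acos v) by lra. rewrite H. apply cos_PI2.
  - rewrite H. apply acos_0.
Qed.

(** * Lifting R^(n+1) to the open upper hemisphere of S^(n+1) *)

Definition lifted_body (n : nat) (g : vec -> R) : vec -> Prop :=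
  alphaN_inv n (image_Id n (Wulff n g)).

(* lift z = (z, 1) / sqrt (1 + |z|^2), the inverse of alpha_N. *)
Definition lift_norm (n : nat) (z : vec) : R := sqrt (1 + dot n z z).
Definition lift (n : nat) (z : vec) : vec := fun i => IdMap n z i / lift_norm n z.

Lemma lift_norm_pos n z : lift_norm n z > 0.
Proof. unfold lift_norm. apply sqrt_lt_R0. pose proof (dot_nonneg n z). lra. Qed.

Lemma lift_norm_sq n z : lift_norm n z * lift_norm n z = 1 + dot n z z.
Proof. unfold lift_norm. apply sqrt_sqrt. pose proof (dot_nonneg n z). lra. Qed.

Lemma lift_low n z i : (i <= n)%nat -> lift n z i = z i / lift_norm n z.
Proof. intros Hi. unfold lift, IdMap. rewrite (proj2 (Nat.leb_le i n) Hi). auto. Qed.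

Lemma lift_last n z : lift n z (S n) = 1 / lift_norm n z.
Proof.
  unfold lift, IdMap. rewrite (proj2 (Nat.leb_gt (S n) n) (Nat.lt_succ_diag_r n)). auto.
Qed.

Lemma lift_last_pos n z : lift n z (S n) > 0.
Proof.
  rewrite lift_last. pose proof (lift_norm_pos n z).
  apply Rlt_gt, Rdiv_lt_0_compat; lra.
Qed.

Lemma alphaN_lift n z i : (i <= n)%nat -> alphaN n (lift n z) i = z i.
Proof.
  intros Hi. unfold alphaN. rewrite lift_low, lift_last by auto.
  pose proof (lift_norm_pos n z). field. lra.
Qed.

Lemma dot_lift_l n z w : dot n (lift n z) w = dot n z w / lift_norm n z.
Proof.
  rewrite (dot_ext_l n (lift n z) (scale (/ lift_norm n z) z)).
  - rewrite dot_scale_l. unfold Rdiv; ring.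
  - intros i Hi. rewrite lift_low by auto. unfold scale, Rdiv; ring.
Qed.

Lemma dot_lift n a b :
  dot (S n) (lift n a) (lift n b) = (dot n a b + 1) / (lift_norm n a * lift_norm n b).
Proof.
  rewrite dot_S, !lift_last, dot_lift_l, dot_sym, dot_lift_l, dot_sym.
  pose proof (lift_norm_pos n a); pose proof (lift_norm_pos n b). field; lra.
Qed.

Lemma lift_sphere n z : sphere (S n) (lift n z).
Proof.
  unfold sphere. rewrite dot_lift, lift_norm_sq. pose proof (dot_nonneg n z). field. lra.
Qed.

(* A point of the upper hemisphere is P_{n+1} times (alpha P, 1). *)
Lemma dot_alphaN n P th : dot n (alphaN n P) th = dot n P th / P (S n).
Proof.
  rewrite (dot_ext_l n (alphaN n P) (scale (/ P (S n)) P)).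
  - rewrite dot_scale_l. unfold Rdiv; ring.
  - intros; unfold alphaN, scale, Rdiv; ring.
Qed.

Lemma dot_upper n P Q : P (S n) <> 0 -> Q (S n) <> 0 ->
  dot (S n) P Q = P (S n) * Q (S n) * (dot n (alphaN n P) (alphaN n Q) + 1).
Proof.
  intros HP HQ.
  rewrite dot_S, dot_alphaN, (dot_sym n P (alphaN n Q)), dot_alphaN, (dot_sym n Q P).
  field. auto.
Qed.

Lemma lifted_body_iff n g P : lifted_body n g P <->
  sphere (S n) P /\ P (S n) > 0 /\ Wulff n g (alphaN n P).
Proof.
  split.
  - intros [H1 [H2 [x [Hx He]]]]. repeat split; auto.
    apply (wulff_ext n g x); auto. intros i Hi. rewrite He by lia.
    unfold IdMap. rewrite (proj2 (Nat.leb_le i n) Hi). auto.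
  - intros [H1 [H2 H3]]. repeat split; auto. exists (alphaN n P); split; auto.
    intros i Hi. unfold IdMap. destruct (Nat.leb i n) eqn:E; auto.
    apply Nat.leb_gt in E. assert (i = S n) by lia. subst.
    unfold alphaN. field. lra.
Qed.

Lemma lift_in_lifted_body n g z : lifted_body n g (lift n z) <-> Wulff n g z.
Proof.
  rewrite lifted_body_iff. split.
  - intros [_ [_ H]]. apply (wulff_ext n g (alphaN n (lift n z))); auto.
    intros; apply alphaN_lift; auto.
  - intros H. split; [apply lift_sphere|]. split; [apply lift_last_pos|].
    apply (wulff_ext n g z); auto. intros; symmetry; apply alphaN_lift; auto.
Qed.

Lemma sdist_upper_le n P Q : P (S n) > 0 -> Q (S n) > 0 ->
  (sdist (S n) P Q <= PI / 2 <-> dot n (alphaN n P) (alphaN n Q) >= -1).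
Proof.
  intros HP HQ. unfold sdist. rewrite acos_le_PI2_iff, dot_upper by lra.
  assert (Hpq : 0 < P (S n) * Q (S n)) by (apply Rmult_lt_0_compat; lra).
  split; intros H; nra.
Qed.

Lemma sdist_upper_eq n P Q : P (S n) > 0 -> Q (S n) > 0 ->
  (sdist (S n) P Q = PI / 2 <-> dot n (alphaN n P) (alphaN n Q) = -1).
Proof.
  intros HP HQ. unfold sdist. rewrite acos_eq_PI2_iff, dot_upper by lra.
  split; intros H.
  - apply Rmult_integral in H. destruct H as [H|H]; [|lra].
    apply Rmult_integral in H. lra.
  - rewrite H; ring.
Qed.

(** * The boundary of the lifted body *)

(* The cone over W_gamma x {1}: the homogeneous form of the Wulff inequalities. *)
Definition in_cone (n : nat) (g : vec -> R) (P : vec) : Prop :=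
  forall th, sphere n th -> dot n P th <= P (S n) * g th.

Lemma lifted_body_cone_iff n g P : lifted_body n g P <->
  sphere (S n) P /\ P (S n) > 0 /\ in_cone n g P.
Proof.
  rewrite lifted_body_iff. split; intros [Hs [Hl H]]; repeat split; auto;
    intros th Hth; specialize (H th Hth); rewrite ?dot_alphaN in *.
  - apply Rmult_le_reg_r with (/ P (S n)); [apply Rinv_0_lt_compat; lra|].
    replace (P (S n) * g th * / P (S n)) with (g th) by (field; lra). exact H.
  - apply Rmult_le_reg_r with (P (S n)); [lra|].
    replace (dot n P th / P (S n) * P (S n)) with (dot n P th) by (field; lra). lra.
Qed.

Lemma lift_ray_continuous n x t eps : eps > 0 -> exists d, d > 0 /\
  forall s, Rabs (s - t) < d -> edist (S n) (lift n (scale t x)) (lift n (scale s x)) < eps.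
Proof.
  intros He. set (X := dot n x x). assert (HX : 0 <= X) by apply dot_nonneg.
  set (F := fun s => (t*s*X+1) / (sqrt(1+t*t*X) * sqrt(1+s*s*X))).
  assert (HF : continuity_pt F t).
  { unfold F. reg. nra.
    assert (0 < sqrt (1 + t*t*X)) by (apply sqrt_lt_R0; nra). nra. }
  assert (HFt : F t = 1) by (unfold F; rewrite sqrt_sqrt by nra; field; nra).
  assert (HFs : forall s, dot (S n) (lift n (scale t x)) (lift n (scale s x)) = F s).
  { intros s. rewrite dot_lift. unfold lift_norm, F. rewrite !dot_scale_l, !dot_scale_r.
    fold X. f_equal; [ring|]. f_equal; f_equal; f_equal; ring. }
  destruct (HF (eps * eps / 2)) as [d [Hd Hd2]].
  { apply Rlt_gt, Rdiv_lt_0_compat; nra. }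
  exists d. split; auto. intros s Hs.
  destruct (Req_dec s t) as [->|Hne]; [rewrite edist_self; lra|].
  specialize (Hd2 s (conj (conj I (not_eq_sym Hne)) Hs)).
  simpl in Hd2. unfold R_dist in Hd2. rewrite HFt in Hd2. apply Rabs_def2 in Hd2.
  rewrite edist_unit, HFs by apply lift_sphere.
  rewrite <- (sqrt_square eps) by lra. apply sqrt_lt_1_alt.
  pose proof (cauchy_schwarz_unit (S n) _ _ (lift_sphere n (scale t x))
                (lift_sphere n (scale s x))) as Hcs.
  rewrite HFs in Hcs. pose proof (Rle_abs (F s)). split; lra.
Qed.

Lemma ray_meets_boundary n g : positive_on_sphere n g -> forall x, ~ Wulff n g x ->
  exists t, 0 <= t < 1 /\ Wulff n g (scale t x) /\
    sph_boundary (S n) (lifted_body n g) (lift n (scale t x)).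
Proof.
  intros Hpos x Hx.
  set (E := fun s => 0 <= s <= 1 /\ Wulff n g (scale s x)).
  assert (E0 : E 0) by (split; [lra | apply wulff_origin; auto]).
  destruct (completeness E) as [t Ht].
  { exists 1. intros s [Hs _]; lra. }
  { exists 0; auto. }
  assert (t0 : 0 <= t) by (apply (proj1 Ht); auto).
  assert (t1 : t <= 1) by (apply (proj2 Ht); intros s [Hs _]; lra).
  assert (HWt : Wulff n g (scale t x))
    by (apply (wulff_scale_lub n g x E t Hpos t0); auto; intros l [_ Hl]; auto).
  assert (tlt : t < 1).
  { destruct (Req_dec t 1) as [->|]; [|lra]. exfalso. apply Hx.
    apply (wulff_ext n g (scale 1 x)); auto. intros; unfold scale; ring. }
  exists t. split; [lra|]. split; auto.
  split; [apply lift_sphere|]. intros eps Heps. split.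
  - exists (lift n (scale t x)). split; [apply lift_sphere|]. split.
    + apply lift_in_lifted_body; auto.
    + rewrite edist_self; lra.
  - destruct (lift_ray_continuous n x t eps Heps) as [d [Hd Hd2]].
    set (s := t + Rmin d (1 - t) / 2).
    assert (0 < Rmin d (1 - t)) by (apply Rmin_pos; lra).
    pose proof (Rmin_l d (1 - t)); pose proof (Rmin_r d (1 - t)).
    exists (lift n (scale s x)). split; [apply lift_sphere|]. split.
    + rewrite lift_in_lifted_body. intros Hw.
      assert (Hs : s <= t) by (apply (proj1 Ht); split; [unfold s; lra | auto]).
      unfold s in Hs; lra.
    + apply Hd2. unfold s. rewrite Rabs_right; lra.
Qed.

Lemma slack_lipschitz n g P Q th : sphere n th -> 0 <= g th ->
  P (S n) * g th - dot n P th - edist (S n) P Q * (1 + g th)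
  <= Q (S n) * g th - dot n Q th.
Proof.
  intros Hth Hg.
  assert (Hth1 : dot n th th <= 1) by (unfold sphere in Hth; lra).
  pose proof (dot_lipschitz_unit n th P Q Hth1) as Hlip.
  rewrite (dot_sym n th P), (dot_sym n th Q) in Hlip. apply Rabs_le_between in Hlip.
  pose proof (edist_S n P Q).
  pose proof (edist_coord (S n) P Q (S n) (le_n _)) as Hlast. apply Rabs_le_between in Hlast.
  assert ((P (S n) - Q (S n)) * g th <= edist (S n) P Q * g th)
    by (apply Rmult_le_compat_r; lra).
  lra.
Qed.

Lemma boundary_in_cone n g P : positive_on_sphere n g ->
  sph_boundary (S n) (lifted_body n g) P -> in_cone n g P.
Proof.
  intros Hpos [_ Hnear] th Hth. pose proof (Hpos th Hth).
  apply Rnot_lt_le. intros Hlt.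
  set (eta := dot n P th - P (S n) * g th).
  destruct (proj1 (Hnear (eta / (1 + g th))
                   ltac:(apply Rlt_gt, Rdiv_lt_0_compat; unfold eta; lra)))
    as [Q [_ [HQ Hd]]].
  apply lifted_body_cone_iff in HQ. destruct HQ as [_ [_ HQ]]. specialize (HQ th Hth).
  pose proof (slack_lipschitz n g Q P th Hth ltac:(lra)) as Hslack.
  rewrite edist_sym in Hslack.
  assert (edist (S n) P Q * (1 + g th) < eta).
  { apply Rmult_lt_compat_r with (r := 1 + g th) in Hd; [|lra].
    replace (eta / (1 + g th) * (1 + g th)) with eta in Hd by (field; lra). exact Hd. }
  unfold eta in *. lra.
Qed.

(* A unit vector in the cone lies in the open upper hemisphere: otherwise its
   first n+1 coordinates would pair nonpositively with every direction. *)
Lemma cone_last_pos n g P : positive_on_sphere n g ->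
  sphere (S n) P -> in_cone n g P -> P (S n) > 0.
Proof.
  intros Hpos HsP Hcone. apply Rnot_le_gt. intros Hle.
  assert (Hneg : forall th, sphere n th -> dot n P th <= 0).
  { intros th Hth. specialize (Hcone th Hth). specialize (Hpos th Hth). nra. }
  pose proof (dot_nonneg n P) as HPP.
  destruct (Req_dec (dot n P P) 0) as [H0|H0].
  - unfold sphere in HsP. rewrite dot_S, H0 in HsP.
    assert (Hlast : P (S n) = -1) by nra.
    specialize (Hcone e0 (e0_sphere n)). specialize (Hpos e0 (e0_sphere n)).
    rewrite dot_sym, (dot_null_r n e0 P H0), Hlast in Hcone. lra.
  - set (l := / sqrt (dot n P P)).
    assert (Hsq : 0 < sqrt (dot n P P)) by (apply sqrt_lt_R0; lra).
    assert (Hl : l * l * dot n P P = 1).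
    { unfold l. rewrite <- (sqrt_sqrt (dot n P P)) at 3 by lra. field. lra. }
    specialize (Hneg _ (normalize_sphere n P l Hl)).
    rewrite dot_scale_r in Hneg.
    assert (0 < l) by (apply Rinv_0_lt_compat; lra). nra.
Qed.

(* Boundary points of K lie on a supporting hyperplane: some Wulff inequality
   is an equality.  Otherwise the slack is bounded below by compactness and a
   whole neighbourhood of P lies in K. *)
Lemma boundary_touches n g P :
  continuous_on_sphere n g -> positive_on_sphere n g ->
  sph_boundary (S n) (lifted_body n g) P -> P (S n) > 0 ->
  exists th0, sphere n th0 /\ dot n P th0 = P (S n) * g th0.
Proof.
  intros Hcont Hpos Hbd HPl. pose proof (boundary_in_cone n g P Hpos Hbd) as Hcone.
  destruct Hbd as [_ Hnear].
  apply NNPP. intros Hno.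
  set (h := fun th => P (S n) * g th + dot n (vopp P) th).
  assert (Hh : forall th, h th = P (S n) * g th - dot n P th)
    by (intros; unfold h; rewrite dot_sym, dot_vopp_r, dot_sym; ring).
  assert (Hhpos : positive_on_sphere n h).
  { intros th Hth. rewrite Hh. specialize (Hcone th Hth).
    destruct (Req_dec (dot n P th) (P (S n) * g th)); [|lra].
    exfalso; apply Hno; exists th; auto. }
  destruct (continuous_positive_bounded_below n h (continuous_affine n g _ _ Hcont) Hhpos)
    as [c [Hc Hch]].
  destruct (continuous_bounded_above n g Hcont) as [G HG].
  assert (HG0 : 0 < G).
  { pose proof (Hpos e0 (e0_sphere n)); pose proof (HG e0 (e0_sphere n)); lra. }
  set (eps := Rmin (P (S n)) (c / (1 + G))).
  assert (Heps : eps > 0) by (apply Rmin_pos; [lra | apply Rdiv_lt_0_compat; lra]).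
  assert (Heps1 : eps <= P (S n)) by apply Rmin_l.
  assert (Heps2 : eps <= c / (1 + G)) by apply Rmin_r.
  destruct (proj2 (Hnear eps Heps)) as [Q [HQs [HQK HQd]]].
  apply HQK, lifted_body_cone_iff. split; [auto|]. split.
  - pose proof (edist_coord (S n) P Q (S n) (le_n _)) as Hlast.
    apply Rabs_le_between in Hlast. lra.
  - intros th Hth. specialize (Hch th Hth). rewrite Hh in Hch.
    pose proof (Hpos th Hth). pose proof (HG th Hth).
    pose proof (slack_lipschitz n g P Q th Hth ltac:(lra)) as Hslack.
    assert (edist (S n) P Q * (1 + g th) <= eps * (1 + G)).
    { apply Rmult_le_compat; try lra. apply sqrt_pos. }
    assert (eps * (1 + G) <= c).
    { apply Rle_trans with (c / (1 + G) * (1 + G)); [apply Rmult_le_compat_r; lra|].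
      right; field; lra. }
    lra.
Qed.

(* Fact (2): for self-dual W_gamma every boundary point of K has a point of K
   at distance pi/2, namely the lift of -th0/gamma(th0) for a supporting th0. *)
Lemma boundary_partner n g P :
  continuous_on_sphere n g -> positive_on_sphere n g -> self_dual n g ->
  sph_boundary (S n) (lifted_body n g) P ->
  exists Q, lifted_body n g Q /\ sdist (S n) P Q = PI / 2.
Proof.
  intros Hcont Hpos SD Hbd.
  assert (HPl : P (S n) > 0).
  { apply (cone_last_pos n g P Hpos); [apply Hbd|]. apply boundary_in_cone; auto. }
  destruct (boundary_touches n g P Hcont Hpos Hbd HPl) as [th0 [Hth0 Heq]].
  pose proof (Hpos th0 Hth0).
  set (y := scale (- / g th0) th0).
  assert (Hy : Wulff n g y) by (apply SD, facet_point_dual; auto).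
  exists (lift n y). split; [apply lift_in_lifted_body; auto|].
  apply sdist_upper_eq; [auto | apply lift_last_pos|].
  rewrite (dot_ext_r n _ _ y) by (intros; apply alphaN_lift; auto).
  unfold y. rewrite dot_scale_r, dot_alphaN, Heq. field. lra.
Qed.

Lemma lifted_diameter_le_iff n g :
  (forall P Q, lifted_body n g P -> lifted_body n g Q -> sdist (S n) P Q <= PI / 2)
  <-> wulff_pairing_ge n g.
Proof.
  split.
  - intros Hdiam x y Hx Hy.
    apply (proj2 (lift_in_lifted_body n g x)) in Hx.
    apply (proj2 (lift_in_lifted_body n g y)) in Hy.
    pose proof (proj1 (sdist_upper_le n _ _ (lift_last_pos n x) (lift_last_pos n y))
                  (Hdiam _ _ Hx Hy)) as Hxy.
    rewrite (dot_ext_l n _ x), (dot_ext_r n _ _ y) in Hxy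
      by (intros; apply alphaN_lift; auto).
    exact Hxy.
  - intros Hpair P Q HP HQ. apply lifted_body_iff in HP, HQ.
    apply sdist_upper_le; try tauto. apply Hpair; tauto.
Qed.

(* For self-dual W_gamma the diameter pi/2 is attained: the ray towards a point
   outside W_gamma meets the boundary of K, and boundary points have partners. *)
Lemma lifted_diameter_attained n g :
  continuous_on_sphere n g -> positive_on_sphere n g -> self_dual n g ->
  exists P Q, lifted_body n g P /\ lifted_body n g Q /\ sdist (S n) P Q = PI / 2.
Proof.
  intros Hcont Hpos SD.
  set (x := scale (g e0 + 1) e0).
  assert (Hx : ~ Wulff n g x).
  { intros H. specialize (H e0 (e0_sphere n)). unfold x in H.
    rewrite dot_scale_l, (e0_sphere n) in H. lra. }
  destruct (ray_meets_boundary n g Hpos x Hx) as [t [_ [HWt Hbd]]].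
  destruct (boundary_partner n g _ Hcont Hpos SD Hbd) as [Q [HQ Hd]].
  exists (lift n (scale t x)), Q. split; [apply lift_in_lifted_body; auto | auto].
Qed.

(* If every boundary point of K has a partner at distance pi/2, then DW_gamma
   lies in W_gamma: for x in DW_gamma outside W_gamma the boundary point on the
   ray towards x would give y in W_gamma and t < 1 with <t x, y> = -1, while
   <x, y> >= -1 by [dual_pairing]. *)
Lemma dual_in_wulff n g :
  continuous_on_sphere n g -> positive_on_sphere n g ->
  (forall P, sph_boundary (S n) (lifted_body n g) P ->
     exists Q, lifted_body n g Q /\ sdist (S n) P Q = PI / 2) ->
  forall x, DualWulff n g x -> Wulff n g x.
Proof.
  intros Hcont Hpos Hbd x Hx. apply NNPP. intros HnW.
  destruct (ray_meets_boundary n g Hpos x HnW) as [t [Ht [_ Hbdy]]].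
  destruct (Hbd _ Hbdy) as [Q [HQ Hd]].
  apply lifted_body_iff in HQ. destruct HQ as [_ [HQl HQW]].
  apply sdist_upper_eq in Hd; [|apply lift_last_pos | auto].
  rewrite (dot_ext_l n _ (scale t x)), dot_scale_l in Hd
    by (intros; apply alphaN_lift; auto).
  pose proof (dual_pairing n g Hcont Hpos x _ Hx HQW). nra.
Qed.

Theorem mainTheorem7 (n : nat) (gamma : vec -> R)
  (Hcont : continuous_on_sphere n gamma)
  (Hpos : positive_on_sphere n gamma) :
  self_dual n gamma <->
  constant_diameter (S n)
    (alphaN_inv n (image_Id n (Wulff n gamma))) (PI / 2).
Proof.
  split.
  - intros SD. split; [split|].
    + apply lifted_diameter_attained; auto.
    + apply lifted_diameter_le_iff, self_dual_pairing; auto.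
    + intros P HP. apply boundary_partner; auto.
  - intros [[_ Hdiam] Hbd] x. split.
    + apply wulff_in_dual, lifted_diameter_le_iff; auto.
    + apply dual_in_wulff; auto.
Qed.
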